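(* Let $\omega\ge 2$ and let $\Gamma$ be a connected, non-complete, $\omega$-clique regular finite simple graph. Then the largest adjacency eigenvalue $\mu_{\max}$ of the line graph $L(\Gamma)$ satisfies $2\omega-4<\mu_{\max}$.
   Context: A graph is $\omega$-clique regular if it has a nonempty edge set and every edge lies in exactly one clique of order $\omega$. $L(\Gamma)$ is the line graph of $\Gamma$ (vertices are edges of $\Gamma$, adjacent iff they share an endpoint). *)

From mathcomp Require Import all_boot all_order all_algebra.
Set Implicit Arguments. Unset Strict Implicit. Unset Printing Implicit Defensive.
Import Order.TTheory GRing.Theory Num.Theory.

Definition simple_graph (T : finType) (G : rel T) : Prop :=
  symmetric G /\ irreflexive G.

Definition connected_graph (T : finType) (G : rel T) : Prop :=
  forall x y : T, connect G x y.

Definition complete_graph (T : finType) (G : rel T) : Prop :=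
  forall x y : T, x != y -> G x y.

Definition is_clique (T : finType) (G : rel T) (K : {set T}) : bool :=
  [forall x in K, forall y in K, (x != y) ==> G x y].

Definition clique_regular (T : finType) (G : rel T) (w : nat) : Prop :=
  (exists x y, G x y) /\
  forall x y, G x y ->
    #|[set K : {set T} | [&& is_clique G K, #|K| == w, x \in K & y \in K]]| = 1.

Definition edges (T : finType) (G : rel T) : {set {set T}} :=
  [set e : {set T} | [exists x, exists y, G x y && (e == [set x; y])]].

Definition line_adj (R : nzRingType) (T : finType) (G : rel T)
  : 'M[R]_#|edges G| :=
  \matrix_(i, j) ((enum_val i != enum_val j) &&
                  (enum_val i :&: enum_val j != set0))%:R%R.

Definition largest_eigenvalue (R : numFieldType) (n : nat) (A : 'M[R]_n) (mu : R)
  : Prop :=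
  eigenvalue A mu /\ forall nu, eigenvalue A nu -> (nu <= mu)%R.

(* A vertex a of a w-clique K with a neighbour b outside K lies in the
   w-clique through the edge ab, which meets K only in a; hence
   deg a >= 2w - 2.  If no vertex had this degree, K would be closed under
   adjacency, hence by connectivity the whole vertex set, and the graph would
   be complete.  The deg a edges at a are pairwise adjacent in L(G), so the
   indicator vector of this star has Rayleigh quotient deg a - 1 >= 2w - 3 for
   the symmetric adjacency matrix of L(G); by the spectral theorem, applied
   over R[i], some eigenvalue is at least as large. *)

From mathcomp Require Import all_boot all_order all_algebra.
From mathcomp Require Import sesquilinear spectral polyrcf complex.
From mathcomp Require Import lra zify.
Set Implicit Arguments.
Unset Strict Implicit.
Unset Printing Implicit Defensive.
Import Order.TTheory GRing.Theory Num.Theory.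
Local Open Scope ring_scope.
Local Open Scope sesquilinear_scope.

Section HermitianSpectrum.
Variables (C : numClosedFieldType) (n : nat) (A : 'M[C]_n).
Let P := spectralmx A.
Let d := spectral_diag A.

Lemma eigenvalue_spectral_diag i : A \is normalmx -> eigenvalue A (d 0 i).
Proof.
move=> /orthomx_spectralP A_eq.
have PA : P *m A = diag_mx d *m P.
  by rewrite [in LHS]A_eq !mulmxA mulmxV ?spectral_unit // mul1mx.
apply/eigenvalueP; exists (row i P).
  by rewrite -row_mul PA row_mul row_diag_mx -scalemxAl -rowE.
apply: contraTneq (spectral_unit A) => Pi0.
by rewrite -row_free_unit; apply/row_freePn; exists i; rewrite Pi0 sub0mx.
Qed.

Lemma row_conj_normE (y : 'rV[C]_n) : (y *m y^t*) 0 0 = \sum_j `|y 0 j| ^+ 2.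
Proof. by rewrite mxE; apply: eq_bigr => j _; rewrite !mxE normCK. Qed.

Lemma row_conj_diagE (e y : 'rV[C]_n) :
  (y *m diag_mx e *m y^t*) 0 0 = \sum_j e 0 j * `|y 0 j| ^+ 2.
Proof.
rewrite mul_mx_diag mxE; apply: eq_bigr => j _.
by rewrite !mxE normCK mulrAC mulrC.
Qed.

Lemma hermitian_rayleigh_le_spectral_diag (x : 'rV[C]_n) (q : C) :
  A \is hermsymmx -> x != 0 -> q \is Num.real ->
  q * (x *m x^t*) 0 0 <= (x *m A *m x^t*) 0 0 -> exists i, q <= d 0 i.
Proof.
move=> Aherm x_neq0 q_real le_q_Ax.
have /orthomx_spectralP A_eq := hermitian_normalmx Aherm.
have P_unitary : P \is unitarymx := spectral_unitarymx A.
have d_real j : d 0 j \is Num.real.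
  exact: mxOverP (hermitian_spectral_diag_real Aherm) 0 j.
set y := x *m P^t*.
have x_eq : x = y *m P by rewrite /y mulmxKtV.
have xC_eq : x^t* = P^t* *m y^t* by rewrite x_eq trmx_mul map_mxM.
have norm_x : (x *m x^t*) 0 0 = \sum_j `|y 0 j| ^+ 2.
  by rewrite xC_eq {1}x_eq mulmxA mulmxtVK // row_conj_normE.
have form_x : (x *m A *m x^t*) 0 0 = \sum_j d 0 j * `|y 0 j| ^+ 2.
  rewrite xC_eq {1}x_eq A_eq invmx_unitary // !mulmxA mulmxtVK //.
  by rewrite mulmxtVK // row_conj_diagE.
have [j0 yj0_neq0] : exists j, y 0 j != 0.
  by apply/rV0Pn; apply: contraNneq x_neq0 => y0; rewrite x_eq y0 mul0mx.
have [/existsP //|/existsPn q_gt_d] := boolP [exists i, q <= d 0 i].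
have d_lt_q j : d 0 j < q by rewrite real_ltNge ?d_real ?q_gt_d.
have gap_gt0 : 0 < \sum_j (q - d 0 j) * `|y 0 j| ^+ 2.
  rewrite (bigD1 j0) //= ltr_wpDr ?sumr_ge0 // => [j _|].
    by rewrite mulr_ge0 ?exprn_ge0 // subr_ge0 ltW.
  by rewrite mulr_gt0 ?exprn_gt0 ?normr_gt0 // subr_gt0.
move: gap_gt0; under eq_bigr do rewrite mulrBl.
rewrite sumrB -mulr_sumr -norm_x -form_x subr_gt0.
by move=> /lt_geF; rewrite le_q_Ax.
Qed.
End HermitianSpectrum.

Lemma symmetric_rayleigh_le_eigenvalue (R : rcfType) n (A : 'M[R]_n)
    (x : 'rV[R]_n) (q : R) :
  A^T = A -> x != 0 -> q * (x *m x^T) 0 0 <= (x *m A *m x^T) 0 0 ->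
  exists2 mu, eigenvalue A mu & q <= mu.
Proof.
move=> A_sym x_neq0 le_q_Ax.
pose f := real_complex R.
have f_real r : f r \is Num.real by apply/complex_realP; exists r.
have f_conj r : (f r)^* = f r by exact/CrealP.
have Af_herm : map_mx f A \is hermsymmx.
  apply/is_hermitianmxP; rewrite expr0 scale1r; apply/matrixP => i j.
  by rewrite !mxE f_conj -[in RHS]A_sym mxE.
have xfC : (map_mx f x)^t* = map_mx f x^T.
  by apply/matrixP => i j; rewrite !mxE f_conj.
have [i le_q_di] : exists i, f q <= spectral_diag (map_mx f A) 0 i.
  apply: (hermitian_rayleigh_le_spectral_diag (x := map_mx f x) Af_herm _
    (f_real q)).
  - by rewrite map_mx_eq0.
  - by rewrite xfC -!map_mxM ![(map_mx f _) 0 0]mxE -rmorphM lecR.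
set di := spectral_diag (map_mx f A) 0 i in le_q_di *.
have di_eq : f (complex.Re di) = di.
  exact/RRe_real/(mxOverP (hermitian_spectral_diag_real Af_herm)).
exists (complex.Re di); last by move: le_q_di; rewrite -di_eq lecR.
have := eigenvalue_spectral_diag i (hermitian_normalmx Af_herm).
by rewrite -/di -di_eq eigenvalue_map.
Qed.

Lemma exists_largest_eigenvalue (R : rcfType) n (A : 'M[R]_n) (mu0 : R) :
  eigenvalue A mu0 -> exists2 mu, largest_eigenvalue A mu & mu0 <= mu.
Proof.
move=> eig_mu0.
have roots_eig nu : (nu \in rootsR (char_poly A)) = eigenvalue A nu.
  rewrite -roots_on_rootsR ?monic_neq0 ?char_poly_monic //.
  by rewrite eigenvalue_root_char.
exists (\big[Order.max/mu0]_(nu <- rootsR (char_poly A)) nu).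
  split; last by move=> nu; rewrite -roots_eig => nu_root; exact: le_bigmax_seq.
  rewrite big_seq; apply: (big_ind (eigenvalue A)) => // [mu1 mu2 eig1 eig2|nu].
    by rewrite maxEle; case: ifP.
  by rewrite roots_eig.
exact: bigmax_ge_id.
Qed.

Lemma symmetric_clique_eigenvalue (R : rcfType) n (A : 'M[R]_n)
    (S : {set 'I_n}) :
  A^T = A -> S != set0 -> {in S &, forall i j, A i j = (i != j)%:R} ->
  exists2 mu, eigenvalue A mu & #|S|%:R - 1 <= mu.
Proof.
move=> A_sym S_neq0 A_S.
set x : 'rV[R]_n := \row_i (i \in S)%:R.
have form_x (M : 'M_n) :
    (x *m M *m x^T) 0 0 = \sum_(j in S) \sum_(i in S) M i j.
  rewrite mxE [RHS]big_mkcond; apply: eq_bigr => j _.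
  rewrite !mxE; case: (j \in S); rewrite ?mulr1 ?mulr0 // [RHS]big_mkcond.
  apply: eq_bigr => i _; rewrite !mxE.
  by case: (i \in S); rewrite ?mul1r ?mul0r.
have norm_x : (x *m x^T) 0 0 = #|S|%:R.
  rewrite -[x in x *m _]mulmx1 form_x -sumr_const; apply: eq_bigr => j jS.
  rewrite (bigD1 j) //= big1 => [|i /andP[_ /negbTE ij]].
    by rewrite mxE eqxx addr0.
  by rewrite mxE ij.
have form_A : (x *m A *m x^T) 0 0 = #|S|%:R * (#|S|%:R - 1).
  transitivity (\sum_(j in S) \sum_(i in S) (1 - (1%:M : 'M[R]_n) i j)).
    rewrite form_x; apply: eq_bigr => j jS; apply: eq_bigr => i iS.
    by rewrite A_S // mxE; case: (i == j); rewrite ?subrr ?subr0.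
  under eq_bigr do rewrite sumrB.
  rewrite sumrB -(form_x 1%:M) mulmx1 norm_x.
  by rewrite !sumr_const mulrBr mulr1 mulr_natr.
apply: (symmetric_rayleigh_le_eigenvalue A_sym (x := x)).
  have [j jS] := set0Pn _ S_neq0.
  by apply/rV0Pn; exists j; rewrite mxE jS oner_neq0.
by rewrite norm_x form_A mulrC.
Qed.

Section CliqueRegular.
Variables (T : finType) (G : rel T) (w : nat).

Definition neighbours (v : T) : {set T} := [set u | G v u].

Lemma clique_adj K x y :
  is_clique G K -> x \in K -> y \in K -> x != y -> G x y.
Proof.
by move=> /forall_inP/(_ x) K_x /K_x/forall_inP/(_ y) K_xy /K_xy/implyP.
Qed.

Definition edge_clique x y K :=
  [&& is_clique G K, #|K| == w, x \in K & y \in K].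

Hypothesis G_reg : clique_regular G w.

Lemma exists_edge_clique x y : G x y -> exists K, edge_clique x y K.
Proof.
move=> Gxy; have /eqP/cards1P[K K_eq] := G_reg.2 x y Gxy.
by exists K; have := set11 K; rewrite -K_eq inE.
Qed.

Lemma edge_clique_uniq x y K K' :
  G x y -> edge_clique x y K -> edge_clique x y K' -> K = K'.
Proof.
move=> Gxy xyK xyK'; have /eqP/cards1P[K0 K0_eq] := G_reg.2 x y Gxy.
have inK0 L : edge_clique x y L -> L = K0.
  by move=> xyL; apply/set1P; rewrite -K0_eq inE.
by rewrite (inK0 _ xyK) (inK0 _ xyK').
Qed.

Lemma clique_exit_degree_ge K a b :
  is_clique G K -> #|K| = w -> a \in K -> b \notin K -> G a b ->
  (2 * w - 2 <= #|neighbours a|)%N.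
Proof.
move=> K_clique K_w aK bK Gab.
have [K' /and4P[K'_clique /eqP K'_w aK' bK']] := exists_edge_clique Gab.
have KK'_a c : c \in K -> c \in K' -> c = a.
  move=> cK cK'; apply/eqP; apply: contraNT bK => c_neq_a.
  have Gac : G a c by apply: clique_adj K_clique _ _ _; rewrite // eq_sym.
  suff -> : K = K' by [].
  by apply: (edge_clique_uniq Gac); apply/and4P; split; rewrite ?K_w ?K'_w.
have sub : (K :\ a) :|: (K' :\ a) \subset neighbours a.
  apply/subsetP => c; rewrite !inE => /orP[] /andP[c_neq_a cK].
    by apply: (clique_adj K_clique); rewrite // eq_sym.
  by apply: (clique_adj K'_clique); rewrite // eq_sym.
have disj : (K :\ a) :&: (K' :\ a) = set0.
  apply/setP => c; rewrite !inE; apply/negP.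
  move=> /andP[/andP[c_neq_a cK] /andP[_ cK']].
  by rewrite (KK'_a c cK cK') eqxx in c_neq_a.
have := subset_leq_card sub; rewrite cardsU disj cards0.
have := cardsD1 a K; have := cardsD1 a K'; rewrite aK aK' K_w K'_w; lia.
Qed.

Lemma clique_regular_large_degree :
  connected_graph G -> ~ complete_graph G ->
  exists v, (2 * w - 2 <= #|neighbours v|)%N.
Proof.
move=> G_conn G_ncompl.
have [/existsP[v] | /existsPn small_deg] :=
  boolP [exists v, 2 * w - 2 <= #|neighbours v|]%N; first by exists v.
have [[x0 [y0 Gxy0]] _] := G_reg.
have [K /and4P[K_clique /eqP K_w x0K _]] := exists_edge_clique Gxy0.
have K_closed a b : a \in K -> G a b -> b \in K.
  move=> aK Gab; apply: contraT => bK.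
  have deg_a := clique_exit_degree_ge K_clique K_w aK bK Gab.
  by move: (small_deg a); rewrite deg_a.
have K_full z : z \in K.
  have /connectP[p p_path ->] := G_conn x0 z.
  elim: p x0 x0K p_path {Gxy0} => //= b p IHp a aK /andP[Gab p_path].
  exact: IHp (K_closed a b aK Gab) p_path.
by case: G_ncompl => a b; apply: clique_adj K_clique _ _.
Qed.

End CliqueRegular.

Section LineGraph.
Variables (T : finType) (G : rel T).

Definition star (v : T) : {set 'I_#|edges G|} :=
  [set i | v \in @enum_val _ (mem (edges G)) i].

Lemma tr_line_adj (R : nzRingType) : (line_adj R G)^T = line_adj R G.
Proof. by apply/matrixP => i j; rewrite !mxE eq_sym setIC. Qed.

Lemma line_adj_star (R : nzRingType) v :
  {in star v &, forall i j, line_adj R G i j = (i != j)%:R}.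
Proof.
move=> i j; rewrite !inE => vi vj; rewrite mxE (inj_eq enum_val_inj).
suff -> : enum_val i :&: enum_val j != set0 by rewrite andbT.
by apply/set0Pn; exists v; rewrite inE vi.
Qed.

Lemma leq_card_neighbours_star v :
  irreflexive G -> (#|neighbours G v| <= #|star v|)%N.
Proof.
move=> G_irr.
have edge_inj : {in neighbours G v &, injective (fun u => [set v; u])}.
  move=> u1 u2; rewrite !inE => Gvu1 _ eq_vu.
  have /set2P[u1_v|//] : u1 \in [set v; u2] by rewrite -eq_vu set22.
  by rewrite u1_v G_irr in Gvu1.
rewrite -(card_in_imset edge_inj).
rewrite -(card_imset _ (@enum_val_inj _ (mem (edges G)))).
apply/subset_leq_card/subsetP => _ /imsetP[u Gvu ->]; rewrite inE in Gvu.
have vu_edge : [set v; u] \in edges G.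
  rewrite inE; apply/existsP; exists v; apply/existsP; exists u.
  by rewrite Gvu /=.
apply/imsetP; exists (enum_rank_in vu_edge [set v; u]).
  by rewrite inE enum_rankK_in // set21.
by rewrite enum_rankK_in.
Qed.

End LineGraph.

Theorem corollary1 (R : rcfType) (T : finType) (G : rel T) (w : nat) :
  (2 <= w)%N ->
  simple_graph G ->
  connected_graph G ->
  ~ complete_graph G ->
  clique_regular G w ->
  exists mu : R,
    largest_eigenvalue (line_adj R G) mu /\
    2 * w%:R - 4 < mu.
Proof.
move=> w_ge2 [_ G_irr] G_conn G_ncompl G_reg.
have [v deg_v] := clique_regular_large_degree G_reg G_conn G_ncompl.
have star_v := leq_card_neighbours_star v G_irr.
have star_v_neq0 : star G v != set0 by rewrite -card_gt0; lia.
have [mu0 eig_mu0 le_star_mu0] :=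
  symmetric_clique_eigenvalue (@tr_line_adj _ G R) star_v_neq0
    (@line_adj_star _ G R v).
have [mu mu_max le_mu0_mu] := exists_largest_eigenvalue eig_mu0.
exists mu; split => //.
have : (2 * w <= #|star G v| + 2)%N by lia.
by rewrite -(ler_nat R) natrM natrD => ?; lra.
Qed.
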